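(* Let $\mathcal E_i\equiv 1\to H_i\xrightarrow{\alpha_i}G_i\xrightarrow{\beta_i}K_i\to1$ ($i=1,2$) be central extensions of multiplicative Lie algebras and $(\lambda,\mu,\nu)$ a morphism from $\mathcal E_1$ to $\mathcal E_2$. Then $(\lambda,\mu,\nu)$ is an isoclinic morphism if and only if $\nu$ is a multiplicative Lie algebra isomorphism and $\ker\mu\cap{}^M[G_1,G_1]=1$.
   Context: A multiplicative Lie algebra is a group $(G,\cdot)$ with a binary operation $\star$ such that for all $x,y,z\in G$: $x\star x=1$; $x\star(yz)=(x\star y)\,{}^y(x\star z)$; $(xy)\star z={}^x(y\star z)(x\star z)$; $((x\star y)\star{}^yz)((y\star z)\star{}^zx)((z\star x)\star{}^xy)=1$; ${}^z(x\star y)={}^zx\star{}^zy$, where ${}^xy=xyx^{-1}$. Homomorphisms preserve both operations. $Z(G)$ is the group center, $LZ(G)=\{x: x\star y=1\ \forall y\}$, $\mathcal Z(G)=LZ(G)\cap Z(G)$; $[x,y]$ is the group commutator; ${}^M[G,G]=(G\star G)[G,G]$ where $G\star G$ is the ideal generated by all $a\star b$. A central extension is a short exact sequence $1\to H\xrightarrow{\alpha}G\xrightarrow{\beta}K\to1$ of multiplicative Lie algebras with $\alpha(H)\subseteq\mathcal Z(G)$. A morphism $(\lambda,\mu,\nu)$ from $\mathcal E_1$ to $\mathcal E_2$ consists of homomorphisms $\lambda:H_1\to H_2$, $\mu:G_1\to G_2$, $\nu:K_1\to K_2$ with $\mu\alpha_1=\alpha_2\lambda$ and $\beta_2\mu=\nu\beta_1$.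 An isoclinism between $\mathcal E_1,\mathcal E_2$ is a pair of isomorphisms $\lambda':K_1\to K_2$, $\mu':{}^M[G_1,G_1]\to{}^M[G_2,G_2]$ such that $\mu'([g,g'])=[h,h']$ and $\mu'(g\star g')=h\star h'$ whenever $g,g'\in G_1$, $h,h'\in G_2$ satisfy $\beta_2(h)=\lambda'\beta_1(g)$, $\beta_2(h')=\lambda'\beta_1(g')$. A morphism $(\lambda,\mu,\nu)$ is an isoclinic morphism if $(\nu,\mu|_{{}^M[G_1,G_1]})$ is an isoclinism between $\mathcal E_1$ and $\mathcal E_2$. *)

From Stdlib Require Import Utf8.

Set Implicit Arguments.
Unset Strict Implicit.

Record MLA : Type := {
  car :> Type;
  mul : car -> car -> car;
  one : car;
  inv : car -> car;
  star : car -> car -> car;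
  mulA : forall x y z, mul x (mul y z) = mul (mul x y) z;
  mul1x : forall x, mul one x = x;
  mulx1 : forall x, mul x one = x;
  mulVx : forall x, mul (inv x) x = one;
  mulxV : forall x, mul x (inv x) = one;
  star_xx : forall x, star x x = one;
  star_mulr : forall x y z,
    star x (mul y z) = mul (star x y) (mul (mul y (star x z)) (inv y));
  star_mull : forall x y z,
    star (mul x y) z = mul (mul (mul x (star y z)) (inv x)) (star x z);
  star_jacobi : forall x y z,
    let cj := fun a b => mul (mul a b) (inv a) in
    mul (mul (star (star x y) (cj y z)) (star (star y z) (cj z x)))
        (star (star z x) (cj x y)) = one;
  star_conj : forall x y z,
    let cj := fun a b => mul (mul a b) (inv a) in
    cj z (star x y) = star (cj z x) (cj z y)
}.

Arguments mul {m}. Arguments one {m}. Arguments inv {m}. Arguments star {m}.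

Section Basic.
Variable G : MLA.

Definition conjl (x y : G) : G := mul (mul x y) (inv x).
Definition gcomm (x y : G) : G := mul (mul (mul x y) (inv x)) (inv y).

Definition is_subgroup (S : G -> Prop) : Prop :=
  S one /\ (forall x y, S x -> S y -> S (mul x y)) /\ (forall x, S x -> S (inv x)).

Definition is_ideal (I : G -> Prop) : Prop :=
  is_subgroup I /\ (forall g x, I x -> I (conjl g x)) /\
  (forall g x, I x -> I (star g x)) /\ (forall g x, I x -> I (star x g)).

Definition starGG (x : G) : Prop :=
  forall I, is_ideal I -> (forall a b, I (star a b)) -> I x.

Definition commGG (x : G) : Prop :=
  forall S, is_subgroup S -> (forall a b, S (gcomm a b)) -> S x.

Definition McommGG (x : G) : Prop :=
  exists a b, starGG a /\ commGG b /\ x = mul a b.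

Definition center (x : G) : Prop := forall y, mul x y = mul y x.
Definition Lcenter (x : G) : Prop := forall y, star x y = one.
Definition Zcenter (x : G) : Prop := Lcenter x /\ center x.

End Basic.

Definition mla_hom (G1 G2 : MLA) (f : G1 -> G2) : Prop :=
  (forall x y, f (mul x y) = mul (f x) (f y)) /\
  (forall x y, f (star x y) = star (f x) (f y)).

Definition mla_iso (G1 G2 : MLA) (f : G1 -> G2) : Prop :=
  mla_hom f /\ (forall x y, f x = f y -> x = y) /\ (forall z, exists x, f x = z).

Definition central_extension (H G K : MLA) (alpha : H -> G) (beta : G -> K) : Prop :=
  mla_hom alpha /\ mla_hom beta /\
  (forall x y, alpha x = alpha y -> x = y) /\
  (forall k, exists g, beta g = k) /\
  (forall g, beta g = one <-> exists h, alpha h = g) /\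
  (forall h, Zcenter (alpha h)).

Definition ext_morphism (H1 G1 K1 H2 G2 K2 : MLA)
  (alpha1 : H1 -> G1) (beta1 : G1 -> K1) (alpha2 : H2 -> G2) (beta2 : G2 -> K2)
  (lam : H1 -> H2) (mu : G1 -> G2) (nu : K1 -> K2) : Prop :=
  mla_hom lam /\ mla_hom mu /\ mla_hom nu /\
  (forall h, mu (alpha1 h) = alpha2 (lam h)) /\
  (forall g, beta2 (mu g) = nu (beta1 g)).

(** Isoclinism (λ', μ') between E1 and E2.  The map μ' : ^M[G1,G1] -> ^M[G2,G2]
    is represented by a function [mu' : G1 -> G2] of which only its restriction
    to ^M[G1,G1] matters. *)
Definition isoclinism (G1 K1 G2 K2 : MLA)
  (beta1 : G1 -> K1) (beta2 : G2 -> K2) (lam' : K1 -> K2) (mu' : G1 -> G2) : Prop :=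
  mla_iso lam' /\
  (forall x, McommGG x -> McommGG (mu' x)) /\
  (forall x y, McommGG x -> McommGG y -> mu' (mul x y) = mul (mu' x) (mu' y)) /\
  (forall x y, McommGG x -> McommGG y -> mu' (star x y) = star (mu' x) (mu' y)) /\
  (forall x y, McommGG x -> McommGG y -> mu' x = mu' y -> x = y) /\
  (forall z, McommGG z -> exists x, McommGG x /\ mu' x = z) /\
  (forall (g g' : G1) (h h' : G2),
     beta2 h = lam' (beta1 g) -> beta2 h' = lam' (beta1 g') ->
     mu' (gcomm g g') = gcomm h h' /\ mu' (star g g') = star h h').

Definition isoclinic_morphism (H1 G1 K1 H2 G2 K2 : MLA)
  (alpha1 : H1 -> G1) (beta1 : G1 -> K1) (alpha2 : H2 -> G2) (beta2 : G2 -> K2)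
  (lam : H1 -> H2) (mu : G1 -> G2) (nu : K1 -> K2) : Prop :=
  ext_morphism alpha1 beta1 alpha2 beta2 lam mu nu /\
  isoclinism beta1 beta2 nu mu.

(** In a central extension the fibres of [beta] are cosets of elements of
    [𝒵(G)], and [⋆], commutators and conjugation do not see such central
    factors.  If [nu] is onto, every element of [G2] is [mu g * c] with
    [c ∈ 𝒵(G2)], so every generator [a ⋆ b] or [[a, b]] of [^M[G2,G2]] is the
    image under [mu] of the corresponding generator of [^M[G1,G1]]; hence [mu]
    maps [^M[G1,G1]] onto [^M[G2,G2]], it is injective there exactly when its
    kernel meets [^M[G1,G1]] trivially, and the compatibility conditions of an
    isoclinism hold automatically. *)

Section GroupFacts.
Context {G : MLA}.
Implicit Types x y z c : G.

Lemma mulKg x y : mul (inv x) (mul x y) = y.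
Proof. rewrite mulA, mulVx; apply mul1x. Qed.

Lemma mulVKg x y : mul x (mul (inv x) y) = y.
Proof. rewrite mulA, mulxV; apply mul1x. Qed.

Lemma mulgI x y z : mul x y = mul x z -> y = z.
Proof. intro E. rewrite <- (mulKg x y), E. apply mulKg. Qed.

Lemma mul_eq1_inv x y : mul x y = one -> inv x = y.
Proof. intro E. rewrite <- (mulKg x y), E. symmetry; apply mulx1. Qed.

Lemma div_eq1 x y : mul x (inv y) = one -> x = y.
Proof. intro E. rewrite <- (mulx1 x), <- (mulVx y), mulA, E. apply mul1x. Qed.

Lemma invMg x y : inv (mul x y) = mul (inv y) (inv x).
Proof. apply mul_eq1_inv. rewrite <- mulA, mulVKg. apply mulxV. Qed.

(* Expand [(x y) ⋆ (x y) = 1] with both distributive laws. *)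
Lemma star_skew x y : mul (star y x) (star x y) = one.
Proof.
  pose proof (star_xx (mul x y)) as E.
  rewrite star_mull, (star_mulr y x y), star_xx, mulx1, mulxV, mulx1,
    (star_mulr x x y), star_xx, mul1x, <- !mulA, mulKg, <- (mulxV x) in E.
  apply mulgI in E.
  rewrite <- (mulx1 (star x y)), <- (mulVx x), (mulA (star x y)), (mulA (star y x)), E.
  reflexivity.
Qed.

Lemma star_Zcenter_r x c : Zcenter c -> star x c = one.
Proof.
  intros [Hl _]. pose proof (star_skew x c) as E. rewrite (Hl x), mul1x in E. exact E.
Qed.

Lemma star_mulZ_l x c y : Zcenter c -> star (mul x c) y = star x y.
Proof. intros [Hl _]. rewrite star_mull, Hl, mulx1, mulxV. apply mul1x. Qed.

Lemma star_mulZ_r x y c : Zcenter c -> star x (mul y c) = star x y.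
Proof.
  intros Hc. rewrite star_mulr, (star_Zcenter_r x c Hc), mulx1, mulxV. apply mulx1.
Qed.

Lemma conjl_mulZ x c y : Zcenter c -> conjl (mul x c) y = conjl x y.
Proof.
  intros [_ Hc]. unfold conjl. rewrite invMg, <- !mulA. f_equal.
  rewrite (mulA c y), (Hc y), <- mulA, mulVKg. reflexivity.
Qed.

Lemma gcomm_mulZ_l x c y : Zcenter c -> gcomm (mul x c) y = gcomm x y.
Proof.
  intros [_ Hc]. unfold gcomm. rewrite invMg, <- !mulA. f_equal.
  rewrite (mulA c y), (Hc y), <- mulA, mulVKg. reflexivity.
Qed.

Lemma gcomm_mulZ_r x y c : Zcenter c -> gcomm x (mul y c) = gcomm x y.
Proof.
  intros [_ Hc]. unfold gcomm. rewrite invMg, <- !mulA. do 2 f_equal.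
  rewrite (mulA c (inv x)), (Hc (inv x)), <- mulA, mulVKg. reflexivity.
Qed.

Lemma starGG_star x y : starGG (star x y).
Proof. intros I _ Hs. apply Hs. Qed.

Lemma starGG_one : starGG (one : G).
Proof. intros I [[H1 _] _] _. exact H1. Qed.

Lemma starGG_mul x y : starGG x -> starGG y -> starGG (mul x y).
Proof.
  intros Hx Hy I HI Hs. pose proof (Hx I HI Hs). pose proof (Hy I HI Hs).
  destruct HI as [[_ [HM _]] _]. auto.
Qed.

Lemma starGG_inv x : starGG x -> starGG (inv x).
Proof.
  intros Hx I HI Hs. pose proof (Hx I HI Hs). destruct HI as [[_ [_ HV]] _]. auto.
Qed.

Lemma starGG_conjl x y : starGG y -> starGG (conjl x y).
Proof. intros Hy I HI Hs. pose proof (Hy I HI Hs). destruct HI as [_ [HC _]]. auto. Qed.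

Lemma starGG_star_l x y : starGG y -> starGG (star x y).
Proof. intros Hy I HI Hs. pose proof (Hy I HI Hs). destruct HI as [_ [_ [HS _]]]. auto. Qed.

Lemma starGG_star_r x y : starGG x -> starGG (star x y).
Proof. intros Hx I HI Hs. pose proof (Hx I HI Hs). destruct HI as [_ [_ [_ HS]]]. auto. Qed.

Lemma commGG_gcomm x y : commGG (gcomm x y).
Proof. intros S _ Hc. apply Hc. Qed.

Lemma commGG_one : commGG (one : G).
Proof. intros S [H1 _] _. exact H1. Qed.

Lemma commGG_mul x y : commGG x -> commGG y -> commGG (mul x y).
Proof.
  intros Hx Hy S HS Hc. pose proof (Hx S HS Hc). pose proof (Hy S HS Hc).
  destruct HS as [_ [HM _]]. auto.
Qed.

Lemma commGG_inv x : commGG x -> commGG (inv x).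
Proof. intros Hx S HS Hc. pose proof (Hx S HS Hc). destruct HS as [_ [_ HV]]. auto. Qed.

Lemma McommGG_one : McommGG (one : G).
Proof. exists one, one. split; [apply starGG_one|split; [apply commGG_one|]]. symmetry; apply mul1x. Qed.

(* [a b a' b' = (a (b a' b^-1)) (b b')] *)
Lemma McommGG_mul x y : McommGG x -> McommGG y -> McommGG (mul x y).
Proof.
  intros [a [b [Ha [Hb ->]]]] [a' [b' [Ha' [Hb' ->]]]].
  exists (mul a (conjl b a')), (mul b b'). split; [|split].
  - apply starGG_mul, starGG_conjl; assumption.
  - apply commGG_mul; assumption.
  - unfold conjl. rewrite <- !mulA, mulKg. reflexivity.
Qed.

(* [(a b)^-1 = (b^-1 a^-1 b) b^-1] *)
Lemma McommGG_inv x : McommGG x -> McommGG (inv x).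
Proof.
  intros [a [b [Ha [Hb ->]]]].
  exists (conjl (inv b) (inv a)), (inv b). split; [|split].
  - apply starGG_conjl, starGG_inv; assumption.
  - apply commGG_inv; assumption.
  - unfold conjl. rewrite invMg, <- !mulA, mulVx, mulx1. reflexivity.
Qed.

End GroupFacts.

Section Homomorphisms.
Context {G1 G2 : MLA} {f : G1 -> G2}.
Hypothesis Hf : mla_hom f.

Lemma hom_one : f one = one.
Proof. apply (mulgI (f one)). rewrite <- (proj1 Hf), !mulx1. reflexivity. Qed.

Lemma hom_inv x : f (inv x) = inv (f x).
Proof. symmetry. apply mul_eq1_inv. rewrite <- (proj1 Hf), mulxV. apply hom_one. Qed.

Lemma hom_conjl x y : f (conjl x y) = conjl (f x) (f y).
Proof. unfold conjl. rewrite !(proj1 Hf), hom_inv. reflexivity. Qed.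

Lemma hom_gcomm x y : f (gcomm x y) = gcomm (f x) (f y).
Proof. unfold gcomm. rewrite !(proj1 Hf), !hom_inv. reflexivity. Qed.

Lemma hom_starGG x : starGG x -> starGG (f x).
Proof.
  destruct Hf as [Hm Hs].
  intros Hx I [[H1 [HM HV]] [HC [HSl HSr]]] Hst.
  apply (Hx (fun y => I (f y))).
  - repeat split.
    + rewrite hom_one; assumption.
    + intros a b; rewrite Hm; auto.
    + intros a; rewrite hom_inv; auto.
    + intros g a; rewrite hom_conjl; auto.
    + intros g a; rewrite Hs; auto.
    + intros g a; rewrite Hs; auto.
  - intros a b; rewrite Hs; auto.
Qed.

Lemma hom_commGG x : commGG x -> commGG (f x).
Proof.
  intros Hx S [H1 [HM HV]] Hc.
  apply (Hx (fun y => S (f y))).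
  - repeat split.
    + rewrite hom_one; assumption.
    + intros a b; rewrite (proj1 Hf); auto.
    + intros a; rewrite hom_inv; auto.
  - intros a b; rewrite hom_gcomm; auto.
Qed.

Lemma hom_McommGG x : McommGG x -> McommGG (f x).
Proof.
  intros [a [b [Ha [Hb ->]]]]. exists (f a), (f b).
  split; [apply hom_starGG; assumption|split; [apply hom_commGG; assumption|apply Hf]].
Qed.

Lemma hom_inj_McommGG :
  (forall x, McommGG x -> f x = one -> x = one) ->
  forall x y, McommGG x -> McommGG y -> f x = f y -> x = y.
Proof.
  intros Hker x y Hx Hy E. apply div_eq1, Hker.
  - apply McommGG_mul, McommGG_inv; assumption.
  - rewrite (proj1 Hf), hom_inv, E. apply mulxV.
Qed.

End Homomorphisms.

Definition onto_mod_Zcenter {G1 G2 : MLA} (f : G1 -> G2) : Prop :=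
  forall y, exists x c, Zcenter c /\ y = mul (f x) c.

Section OntoModZcenter.
Context {G1 G2 : MLA} {f : G1 -> G2}.
Hypothesis Hf : mla_hom f.
Hypothesis f_onto : onto_mod_Zcenter f.

Lemma starGG_onto z : starGG z -> exists x, starGG x /\ f x = z.
Proof.
  intros Hz. apply (Hz (fun z => exists x, starGG x /\ f x = z)).
  - repeat split.
    + exists one. split; [apply starGG_one|apply (hom_one Hf)].
    + intros u v [x [Hx <-]] [y [Hy <-]]. exists (mul x y).
      split; [apply starGG_mul; assumption|apply Hf].
    + intros u [x [Hx <-]]. exists (inv x).
      split; [apply starGG_inv; assumption|apply (hom_inv Hf)].
    + intros g u [x [Hx <-]]. destruct (f_onto g) as [g1 [c [Hc ->]]].
      exists (conjl g1 x). split; [apply starGG_conjl; assumption|].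
      rewrite conjl_mulZ by exact Hc. apply (hom_conjl Hf).
    + intros g u [x [Hx <-]]. destruct (f_onto g) as [g1 [c [Hc ->]]].
      exists (star g1 x). split; [apply starGG_star_l; assumption|].
      rewrite star_mulZ_l by exact Hc. apply Hf.
    + intros g u [x [Hx <-]]. destruct (f_onto g) as [g1 [c [Hc ->]]].
      exists (star x g1). split; [apply starGG_star_r; assumption|].
      rewrite star_mulZ_r by exact Hc. apply Hf.
  - intros u v. destruct (f_onto u) as [u1 [c [Hc ->]]].
    destruct (f_onto v) as [v1 [d [Hd ->]]].
    exists (star u1 v1). split; [apply starGG_star|].
    rewrite star_mulZ_l, star_mulZ_r by assumption. apply Hf.
Qed.

Lemma commGG_onto z : commGG z -> exists x, commGG x /\ f x = z.
Proof.
  intros Hz. apply (Hz (fun z => exists x, commGG x /\ f x = z)).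
  - repeat split.
    + exists one. split; [apply commGG_one|apply (hom_one Hf)].
    + intros u v [x [Hx <-]] [y [Hy <-]]. exists (mul x y).
      split; [apply commGG_mul; assumption|apply Hf].
    + intros u [x [Hx <-]]. exists (inv x).
      split; [apply commGG_inv; assumption|apply (hom_inv Hf)].
  - intros u v. destruct (f_onto u) as [u1 [c [Hc ->]]].
    destruct (f_onto v) as [v1 [d [Hd ->]]].
    exists (gcomm u1 v1). split; [apply commGG_gcomm|].
    rewrite gcomm_mulZ_l, gcomm_mulZ_r by assumption. apply (hom_gcomm Hf).
Qed.

Lemma McommGG_onto z : McommGG z -> exists x, McommGG x /\ f x = z.
Proof.
  intros [a [b [Ha [Hb ->]]]].
  destruct (starGG_onto a Ha) as [x [Hx <-]]. destruct (commGG_onto b Hb) as [y [Hy <-]].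
  exists (mul x y). split; [exists x, y; auto|apply Hf].
Qed.

End OntoModZcenter.

Lemma central_extension_fiber {H G K : MLA} {alpha : H -> G} {beta : G -> K} :
  central_extension alpha beta ->
  forall a b, beta a = beta b -> exists c, Zcenter c /\ b = mul a c.
Proof.
  intros [_ [Hb [_ [_ [Kb Za]]]]] a b E.
  assert (E1 : beta (mul (inv a) b) = one).
  { rewrite (proj1 Hb), (hom_inv Hb), E. apply mulVx. }
  apply Kb in E1 as [h Eh]. exists (alpha h). split; [apply Za|].
  rewrite Eh. symmetry; apply mulVKg.
Qed.

Section ExtensionMorphism.
Context {H1 G1 K1 H2 G2 K2 : MLA}.
Context {alpha1 : H1 -> G1} {beta1 : G1 -> K1} {alpha2 : H2 -> G2} {beta2 : G2 -> K2}.
Context {lam : H1 -> H2} {mu : G1 -> G2} {nu : K1 -> K2}.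
Hypothesis CE1 : central_extension alpha1 beta1.
Hypothesis CE2 : central_extension alpha2 beta2.
Hypothesis EM : ext_morphism alpha1 beta1 alpha2 beta2 lam mu nu.

Lemma ext_morphism_onto_mod_Zcenter :
  (forall k, exists l, nu l = k) -> onto_mod_Zcenter mu.
Proof.
  intros nu_onto y.
  destruct (nu_onto (beta2 y)) as [k Ek].
  destruct CE1 as [_ [_ [_ [beta1_onto _]]]]. destruct (beta1_onto k) as [x Ex].
  exists x. apply (central_extension_fiber CE2).
  destruct EM as [_ [_ [_ [_ Hmb]]]]. rewrite Hmb, Ex. exact Ek.
Qed.

Lemma ext_morphism_compat (g g' : G1) (h h' : G2) :
  beta2 h = nu (beta1 g) -> beta2 h' = nu (beta1 g') ->
  mu (gcomm g g') = gcomm h h' /\ mu (star g g') = star h h'.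
Proof.
  destruct EM as [_ [Hmu [_ [_ Hmb]]]].
  intros E E'. rewrite <- Hmb in E, E'. symmetry in E, E'.
  destruct (central_extension_fiber CE2 _ _ E) as [c [Hc ->]].
  destruct (central_extension_fiber CE2 _ _ E') as [d [Hd ->]].
  rewrite gcomm_mulZ_l, gcomm_mulZ_r, star_mulZ_l, star_mulZ_r by assumption.
  split; [apply (hom_gcomm Hmu)|apply Hmu].
Qed.

End ExtensionMorphism.

Theorem theorem4p5 (H1 G1 K1 H2 G2 K2 : MLA)
  (alpha1 : H1 -> G1) (beta1 : G1 -> K1) (alpha2 : H2 -> G2) (beta2 : G2 -> K2)
  (lam : H1 -> H2) (mu : G1 -> G2) (nu : K1 -> K2) :
  central_extension alpha1 beta1 ->
  central_extension alpha2 beta2 ->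
  ext_morphism alpha1 beta1 alpha2 beta2 lam mu nu ->
  (isoclinic_morphism alpha1 beta1 alpha2 beta2 lam mu nu <->
   (mla_iso nu /\ (forall x : G1, McommGG x -> mu x = one -> x = one))).
Proof.
  intros CE1 CE2 EM.
  assert (Hmu : mla_hom mu) by apply EM.
  split.
  - intros [_ [Hnu [_ [_ [_ [Hinj _]]]]]]. split; [exact Hnu|].
    intros x Hx E. apply Hinj; [exact Hx|apply McommGG_one|].
    rewrite E. symmetry. apply (hom_one Hmu).
  - intros [Hnu Hker]. split; [exact EM|].
    assert (Honto : onto_mod_Zcenter mu)
      by exact (ext_morphism_onto_mod_Zcenter CE1 CE2 EM (proj2 (proj2 Hnu))).
    split; [exact Hnu|].
    split; [intro x; apply (hom_McommGG Hmu)|].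
    split; [intros x y _ _; apply Hmu|].
    split; [intros x y _ _; apply Hmu|].
    split; [exact (hom_inj_McommGG Hmu Hker)|].
    split; [exact (McommGG_onto Hmu Honto)|].
    intros g g' h h'. exact (ext_morphism_compat CE2 EM g g' h h').
Qed.
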